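(* Let $f:\mathbb{X}\to\mathbb{R}$ be a (finite, real-valued) measurable function. If $$\mu\Big(\bigcup_{N>0}\bigcap_{n>N}\{B_nf\le 0\}\Big)>0,$$ i.e. the set of points $x$ such that $B_nf(x)\le 0$ for all sufficiently large $n$ has positive measure, then $\sup_{n>0}\sum_{i=0}^{n-1}f\circ T^i<\infty$ $\mu$-a.e. on $\mathbb{X}$.
   Context: Standing assumptions: $(\mathbb{X},\mathcal{X},\mu,T)$ is a probability space ($\mu(\mathbb{X})=1$) with $T$ an invertible, bi-measurable, measure-preserving, ergodic transformation. For a measurable $f:\mathbb{X}\to\mathbb{R}$ and $n\ge 0$, the symmetric bilateral averages are $B_nf=\frac{1}{2n+1}\sum_{i=-n}^{n}f\circ T^i$. *)

From Stdlib Require Import Reals ZArith.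
Open Scope R_scope.

Definition is_sigma_algebra {X : Type} (M : (X -> Prop) -> Prop) : Prop :=
  M (fun _ => True) /\
  (forall A, M A -> M (fun x => ~ A x)) /\
  (forall A : nat -> X -> Prop, (forall n, M (A n)) -> M (fun x => exists n, A n x)).

Definition is_probability_space {X : Type} (M : (X -> Prop) -> Prop)
    (mu : (X -> Prop) -> R) : Prop :=
  is_sigma_algebra M /\
  (forall A, M A -> 0 <= mu A) /\
  (forall A : nat -> X -> Prop,
      (forall n, M (A n)) ->
      (forall n m x, n <> m -> A n x -> A m x -> False) ->
      infinite_sum (fun n => mu (A n)) (mu (fun x => exists n, A n x))) /\
  mu (fun _ => True) = 1.

Definition measurable_fun {X : Type} (M : (X -> Prop) -> Prop) (f : X -> R) : Prop :=
  forall a : R, M (fun x => f x <= a).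

Definition invertible_mpt {X : Type} (M : (X -> Prop) -> Prop)
    (mu : (X -> Prop) -> R) (T Tinv : X -> X) : Prop :=
  (forall x, Tinv (T x) = x) /\ (forall x, T (Tinv x) = x) /\
  (forall A, M A -> M (fun x => A (T x))) /\
  (forall A, M A -> M (fun x => A (Tinv x))) /\
  (forall A, M A -> mu (fun x => A (T x)) = mu A).

Definition ergodic {X : Type} (M : (X -> Prop) -> Prop)
    (mu : (X -> Prop) -> R) (T : X -> X) : Prop :=
  forall A, M A -> (forall x, A (T x) <-> A x) -> mu A = 0 \/ mu A = 1.

Definition Tpow {X : Type} (T Tinv : X -> X) (i : Z) (x : X) : X :=
  match i with
  | Z0 => x
  | Zpos p => Nat.iter (Pos.to_nat p) T x
  | Zneg p => Nat.iter (Pos.to_nat p) Tinv x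
  end.

(** symmetric bilateral average B_n f = (1/(2n+1)) sum_{i=-n}^{n} f o T^i *)
Definition Bavg {X : Type} (T Tinv : X -> X) (f : X -> R) (n : nat) (x : X) : R :=
  / INR (2 * n + 1) *
  sum_f_R0 (fun k => f (Tpow T Tinv (Z.of_nat k - Z.of_nat n)%Z x)) (2 * n).

Definition Bsum {X : Type} (T : X -> X) (f : X -> R) (n : nat) (x : X) : R :=
  match n with
  | O => 0
  | S m => sum_f_R0 (fun i => f (Nat.iter i T x)) m
  end.

(* Fix [N] with [mu A > 0] for [A] the set of points where [B_n f <= 0] for every [n > N],
   and put [p = mu A].  The maximal ergodic inequality for the visit counts to [A] (and to its
   complement), combined with ergodicity, shows that for almost every [x] the number of
   [i < n] with [T^i x] in [A] stays within a bounded distance of [[3p/4 n, 5p/4 n]].  So for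
   every large [m] the orbit of [x] is in [A] at some time [c] with [m/2 <= c <= m - N - 2].
   With [k = m - c - 1 > N], the first [m] terms of the orbit split into the first [c - k]
   ones and the window [[c - k, c + k]], whose sum is [(2k + 1) B_k f (T^c x) <= 0]; hence
   [S_m f x <= S_(c-k) f x], and induction on [m] bounds [S_m f x] by its values for small
   [m]. *)

From Stdlib Require Import Reals ZArith Lia Lra List ClassicalEpsilon Classical
  FunctionalExtensionality PropExtensionality.
Open Scope R_scope.

Fixpoint sumr (g : nat -> R) (s L : nat) : R :=
  match L with O => 0 | S L' => g s + sumr g (S s) L' end.

Lemma sumr_add g a : forall s b, sumr g s (a + b) = sumr g s a + sumr g (s + a) b.
Proof.
  induction a as [|a IHa]; intros s b; simpl.
  - rewrite Nat.add_0_r; ring.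
  - rewrite IHa. replace (S s + a)%nat with (s + S a)%nat by lia. ring.
Qed.

Lemma sumr_ext g h s L : (forall i, (s <= i < s + L)%nat -> g i = h i) ->
  sumr g s L = sumr h s L.
Proof.
  revert s; induction L as [|L IHL]; intros s H; simpl; auto.
  rewrite (H s) by lia. rewrite (IHL (S s)); auto. intros; apply H; lia.
Qed.

Lemma sumr_shift g L : forall s t, sumr g (s + t) L = sumr (fun j => g (s + j)%nat) t L.
Proof.
  induction L as [|L IHL]; intros s t; simpl; auto.
  rewrite <- IHL. replace (S (s + t)) with (s + S t)%nat by lia. auto.
Qed.

Lemma sumr_nonneg g s L : (forall i, 0 <= g i) -> 0 <= sumr g s L.
Proof.
  revert s; induction L as [|L IHL]; intros s H; simpl; [lra|].
  specialize (IHL (S s) H). specialize (H s). lra.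
Qed.

Lemma sumr_le_len g s L : (forall i, g i <= 1) -> sumr g s L <= INR L.
Proof.
  revert s; induction L as [|L IHL]; intros s H; simpl sumr; [simpl; lra|].
  rewrite S_INR. specialize (IHL (S s) H). specialize (H s). lra.
Qed.

Lemma sumr_le_longer g s L L' : (forall i, 0 <= g i) -> (L <= L')%nat ->
  sumr g s L <= sumr g s L'.
Proof.
  intros H HL. replace L' with (L + (L' - L))%nat by lia. rewrite sumr_add.
  pose proof (sumr_nonneg g (s + L) (L' - L) H). lra.
Qed.

Lemma sumr_one_minus g s L : sumr (fun i => 1 - g i) s L = INR L - sumr g s L.
Proof.
  revert s; induction L as [|L IHL]; intros s; simpl sumr; [simpl; lra|].
  rewrite IHL, S_INR. lra.
Qed.

Lemma sumr_zero g s L : (forall i, (s <= i < s + L)%nat -> g i = 0) -> sumr g s L = 0.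
Proof.
  intro H. rewrite (sumr_ext g (fun _ => 0)) by auto. clear H.
  revert s; induction L as [|L IHL]; intros; simpl; auto. rewrite IHL; ring.
Qed.

Lemma sum_f_R0_sumr h n : sum_f_R0 h n = sumr h 0 (S n).
Proof.
  induction n as [|n IHn]; simpl sum_f_R0.
  - simpl; ring.
  - rewrite IHn. replace (S (S n)) with (S n + 1)%nat by lia. rewrite sumr_add. simpl. ring.
Qed.

Lemma IZR_nat_diff z : IZR z = INR (Z.to_nat z) - INR (Z.to_nat (- z)).
Proof.
  rewrite !INR_IZR_INZ, <- minus_IZR. f_equal. lia.
Qed.

Lemma inv_INR_S_lt (e : R) : 0 < e -> exists m : nat, / (INR m + 1) < e.
Proof.
  intro He. destruct (INR_unbounded (/ e)) as [m Hm]. exists m.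
  pose proof (pos_INR m).
  rewrite <- (Rinv_inv e). apply Rinv_lt_contravar; [|lra].
  apply Rmult_lt_0_compat; [apply Rinv_0_lt_compat|]; lra.
Qed.

Lemma infinite_sum_le s l c : infinite_sum s l -> (forall n, sum_f_R0 s n <= c) -> l <= c.
Proof.
  intros H Hc. destruct (Rle_dec l c) as [|Hn]; auto. exfalso.
  destruct (H (l - c)) as [N HN]; [lra|]. specialize (HN N (le_n _)). specialize (Hc N).
  unfold Rdist in HN. rewrite Rabs_left1 in HN by lra. lra.
Qed.

Lemma infinite_sum_eventually_const s l N0 :
  (forall n, (N0 <= n)%nat -> sum_f_R0 s n = l) -> infinite_sum s l.
Proof.
  intros H eps He. exists N0. intros n Hn.
  rewrite H by lia. unfold Rdist. rewrite Rminus_diag, Rabs_R0. lra.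
Qed.

Fixpoint running_max (h : nat -> R) (n : nat) : R :=
  match n with O => h O | S n' => Rmax (running_max h n') (h (S n')) end.

Lemma running_max_ge h n : forall j, (j <= n)%nat -> h j <= running_max h n.
Proof.
  induction n as [|n IHn]; intros j Hj.
  - replace j with O by lia. simpl; lra.
  - simpl. destruct (Nat.eq_dec j (S n)) as [->|Hne].
    + apply Rmax_r.
    + eapply Rle_trans; [apply IHn; lia|apply Rmax_l].
Qed.

Lemma partial_sums_bounded (g : nat -> R) (good : nat -> Prop) N M0 :
  (forall c k, good c -> (N < k <= c)%nat -> sumr g (c - k) (2 * k + 1) <= 0) ->
  (forall m, (M0 <= m)%nat -> exists c, good c /\ (m <= 2 * c + 1)%nat /\ (c + N + 2 <= m)%nat) ->
  forall m, sumr g 0 m <= running_max (sumr g 0) M0.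
Proof.
  intros Hwindow Hgood m. induction m as [m IH] using (well_founded_induction lt_wf).
  destruct (le_lt_dec m M0) as [Hm|Hm].
  - apply (running_max_ge (sumr g 0)); auto.
  - destruct (Hgood m ltac:(lia)) as [c [Hc [H1 H2]]].
    set (k := (m - c - 1)%nat).
    (* [m] splits as a shorter prefix plus the window of radius [k] centred at [c] *)
    replace m with ((c - k) + (2 * k + 1))%nat by (unfold k; lia).
    rewrite sumr_add. simpl (0 + (c - k))%nat.
    pose proof (Hwindow c k Hc ltac:(unfold k; lia)).
    pose proof (IH (c - k)%nat ltac:(unfold k; lia)). lra.
Qed.

Lemma good_times_in_window (a : nat -> R) (good : nat -> Prop) p N (K1 K2 : nat) : 0 < p ->
  (forall c, ~ good c -> a c = 0) ->
  (forall n, sumr a 0 n < 5 * p / 4 * INR n + INR K1) ->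
  (forall n, 3 * p / 4 * INR n - INR K2 < sumr a 0 n) ->
  exists M0, forall m, (M0 <= m)%nat ->
    exists c, good c /\ (m <= 2 * c + 1)%nat /\ (c + N + 2 <= m)%nat.
Proof.
  intros Hp Ha Hup Hlo.
  destruct (INR_unbounded (8 * (3 * p / 4 * (INR N + 1) + INR K1 + INR K2) / p)) as [M1 HM1].
  exists (M1 + 2 * N + 4)%nat. intros m Hm.
  apply NNPP; intro Hno.
  set (h := (m / 2)%nat).
  assert (Hh1 : (2 * h <= m)%nat) by (unfold h; apply Nat.Div0.mul_div_le).
  assert (Hh2 : (m <= 2 * h + 1)%nat).
  { unfold h. pose proof (Nat.div_mod_eq m 2). pose proof (Nat.mod_upper_bound m 2). lia. }
  (* without a good time in [h, m - N - 1), the two frequency bounds clash *)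
  assert (Hgap : sumr a 0 (m - N - 1) = sumr a 0 h).
  { replace (m - N - 1)%nat with (h + (m - N - 1 - h))%nat by lia.
    rewrite sumr_add, (sumr_zero a (0 + h)); [ring|].
    intros i Hi. apply Ha. intro Hi'. apply Hno. exists i. repeat split; auto; lia. }
  specialize (Hup h). specialize (Hlo (m - N - 1)%nat). rewrite Hgap in Hlo.
  rewrite !minus_INR in Hlo by lia. simpl (INR 1) in Hlo.
  assert (Hh : 2 * INR h <= INR m).
  { replace 2 with (INR 2) by (simpl; lra). rewrite <- mult_INR. apply le_INR; auto. }
  assert (HmM : INR M1 <= INR m) by (apply le_INR; lia).
  assert (HM1' : 8 * (3 * p / 4 * (INR N + 1) + INR K1 + INR K2) < p * INR M1).
  { apply (Rmult_lt_compat_l p) in HM1; auto. unfold Rdiv in HM1.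
    rewrite (Rmult_comm _ (/ p)), <- Rmult_assoc, Rinv_r, Rmult_1_l in HM1 by lra. lra. }
  nra.
Qed.

Lemma pred_ext {X : Type} (A B : X -> Prop) : (forall x, A x <-> B x) -> A = B.
Proof.
  intro H; apply functional_extensionality; intro x; apply propositional_extensionality; auto.
Qed.

Definition ind {X : Type} (S : X -> Prop) (x : X) : R :=
  if excluded_middle_informative (S x) then 1 else 0.

Lemma ind_1 {X} (S : X -> Prop) x : S x -> ind S x = 1.
Proof. unfold ind; destruct (excluded_middle_informative (S x)); tauto. Qed.

Lemma ind_0 {X} (S : X -> Prop) x : ~ S x -> ind S x = 0.
Proof. unfold ind; destruct (excluded_middle_informative (S x)); tauto. Qed.

Lemma ind_bounds {X} (S : X -> Prop) x : 0 <= ind S x <= 1.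
Proof. unfold ind; destruct (excluded_middle_informative (S x)); lra. Qed.

Lemma ind_compl {X} (S : X -> Prop) x : ind (fun y => ~ S y) x = 1 - ind S x.
Proof.
  destruct (classic (S x)).
  - rewrite ind_0, ind_1 by tauto. ring.
  - rewrite ind_1, ind_0 by auto. ring.
Qed.


Section Orbit.

Context {X : Type} (T : X -> X).

Definition visits (A : X -> Prop) (n : nat) (x : X) : R :=
  sumr (fun i => ind A (Nat.iter i T x)) 0 n.

Lemma visits_iter A n s x :
  visits A n (Nat.iter s T x) = sumr (fun c => ind A (Nat.iter c T x)) s n.
Proof.
  unfold visits. pose proof (sumr_shift (fun c => ind A (Nat.iter c T x)) n s 0) as E.
  rewrite Nat.add_0_r in E. rewrite E.
  apply sumr_ext; intros i _. rewrite <- Nat.iter_add, Nat.add_comm. reflexivity.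
Qed.

Lemma visits_S A n x : visits A (S n) x = ind A x + visits A n (T x).
Proof. change (T x) with (Nat.iter 1 T x). rewrite visits_iter. reflexivity. Qed.

Definition exceed_set (A : X -> Prop) (beta : R) (K : nat) (y : X) : Prop :=
  exists n, (n <= K)%nat /\ visits A n y > beta * INR n.

(* Each time the orbit is in [exceed_set], the next [n <= K] steps contain more than
   [beta * n] visits to [A]; these blocks are chained greedily. *)
Lemma exceed_set_visits_le A beta K x : 0 <= beta -> forall L s,
  beta * sumr (fun c => ind (exceed_set A beta K) (Nat.iter c T x)) s L <=
  sumr (fun c => ind A (Nat.iter c T x)) s (L + K).
Proof.
  intros Hb. set (a := fun c => ind A (Nat.iter c T x)).
  set (b := fun c => ind (exceed_set A beta K) (Nat.iter c T x)).
  assert (Ha0 : forall i, 0 <= a i) by (intro; apply ind_bounds).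
  assert (Hb0 : forall i, 0 <= b i) by (intro; apply ind_bounds).
  assert (Hb1 : forall i, b i <= 1) by (intro; apply ind_bounds).
  intro L. induction L as [L IH] using (well_founded_induction lt_wf). intro s.
  destruct L as [|L'].
  - simpl sumr at 1. rewrite Rmult_0_r. apply sumr_nonneg; auto.
  - destruct (classic (exceed_set A beta K (Nat.iter s T x))) as [HB|HB].
    + destruct HB as [n [HnK Hn]]. rewrite visits_iter in Hn. fold a in Hn.
      assert (Hn0 : (n > 0)%nat) by (destruct n; [simpl in Hn; lra|lia]).
      destruct (le_lt_dec (S L') n) as [HLn|HLn].
      * pose proof (sumr_le_len b s (S L') Hb1).
        assert (INR (S L') <= INR n) by (apply le_INR; auto).
        pose proof (sumr_le_longer a s n (S L' + K) Ha0 ltac:(lia)).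
        nra.
      * replace (S L') with (n + (S L' - n))%nat by lia. rewrite sumr_add.
        replace (n + (S L' - n) + K)%nat with (n + ((S L' - n) + K))%nat by lia.
        rewrite sumr_add.
        pose proof (IH (S L' - n)%nat ltac:(lia) (s + n)%nat).
        pose proof (sumr_le_len b s n Hb1). nra.
    + simpl sumr. unfold b at 1. rewrite ind_0 by auto.
      pose proof (IH L' ltac:(lia) (S s)). fold a b. pose proof (Ha0 s). lra.
Qed.

Definition excess_unbounded (A : X -> Prop) (beta : R) (x : X) : Prop :=
  forall K : nat, exists n : nat, visits A n x - beta * INR n >= INR K.

Lemma excess_unbounded_T A beta x : 0 <= beta ->
  (excess_unbounded A beta (T x) <-> excess_unbounded A beta x).
Proof.
  intro Hb. split.
  - intros H K. destruct (INR_unbounded (INR K + beta)) as [K' HK'].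
    destruct (H K') as [n Hn]. exists (S n). rewrite visits_S, S_INR.
    pose proof (ind_bounds A x). lra.
  - intros H K. destruct (H (S K)) as [[|n] Hn].
    + unfold visits in Hn. rewrite S_INR in Hn. simpl in Hn. pose proof (pos_INR K). lra.
    + exists n. rewrite visits_S, !S_INR in Hn. pose proof (ind_bounds A x). lra.
Qed.

Section Inverse.

Context (Tinv : X -> X) (HTinv : forall x, Tinv (T x) = x).

Lemma iter_inv_iter a : forall b y, Nat.iter a Tinv (Nat.iter (a + b) T y) = Nat.iter b T y.
Proof.
  induction a as [|a IHa]; intros b y; [reflexivity|].
  rewrite Nat.iter_succ_r.
  change (Nat.iter (S a + b) T y) with (T (Nat.iter (a + b) T y)).
  rewrite HTinv. apply IHa.
Qed.

Lemma Tpow_of_nat n y : Tpow T Tinv (Z.of_nat n) y = Nat.iter n T y.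
Proof. destruct n; simpl; auto. rewrite SuccNat2Pos.id_succ. auto. Qed.

Lemma Tpow_opp_of_nat n y : Tpow T Tinv (- Z.of_nat n) y = Nat.iter n Tinv y.
Proof. destruct n; simpl; auto. rewrite SuccNat2Pos.id_succ. auto. Qed.

Lemma Tpow_iter j k c x : (k <= c)%nat ->
  Tpow T Tinv (Z.of_nat j - Z.of_nat k) (Nat.iter c T x) = Nat.iter (c - k + j) T x.
Proof.
  intro Hkc. destruct (le_lt_dec k j) as [Hkj|Hjk].
  - replace (Z.of_nat j - Z.of_nat k)%Z with (Z.of_nat (j - k)) by lia.
    rewrite Tpow_of_nat, <- Nat.iter_add. f_equal; lia.
  - replace (Z.of_nat j - Z.of_nat k)%Z with (- Z.of_nat (k - j))%Z by lia.
    rewrite Tpow_opp_of_nat, <- (iter_inv_iter (k - j) (c - k + j) x).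
    f_equal. f_equal. lia.
Qed.

Definition Bavg_nonpos_after (f : X -> R) (N : nat) (x : X) : Prop :=
  (N > 0)%nat /\ forall n : nat, (n > N)%nat -> Bavg T Tinv f n x <= 0.

Lemma window_sum_nonpos f N x c k : Bavg_nonpos_after f N (Nat.iter c T x) ->
  (N < k <= c)%nat -> sumr (fun i => f (Nat.iter i T x)) (c - k) (2 * k + 1) <= 0.
Proof.
  intros [_ Hc] Hk. specialize (Hc k ltac:(lia)). unfold Bavg in Hc.
  rewrite sum_f_R0_sumr in Hc.
  rewrite (sumr_ext _ (fun j => f (Nat.iter (c - k + j) T x))) in Hc
    by (intros; rewrite Tpow_iter by lia; auto).
  pose proof (sumr_shift (fun i => f (Nat.iter i T x)) (S (2 * k)) (c - k) 0) as E.
  rewrite Nat.add_0_r in E. rewrite <- E in Hc.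
  replace (2 * k + 1)%nat with (S (2 * k)) by lia.
  assert (Hinv : 0 < / INR (2 * k + 1)) by (apply Rinv_0_lt_compat, lt_0_INR; lia).
  apply Rnot_lt_le. intro Hlt. pose proof (Rmult_lt_0_compat _ _ Hinv Hlt). lra.
Qed.

Lemma Bsum_bounded_of_visits f N p x (K1 K2 : nat) : 0 < p ->
  (forall n, visits (Bavg_nonpos_after f N) n x < 5 * p / 4 * INR n + INR K1 /\
             3 * p / 4 * INR n - INR K2 < visits (Bavg_nonpos_after f N) n x) ->
  exists C, forall n, (n > 0)%nat -> Bsum T f n x <= C.
Proof.
  intros Hp Hvis.
  set (good := fun c => Bavg_nonpos_after f N (Nat.iter c T x)).
  destruct (good_times_in_window (fun c => ind (Bavg_nonpos_after f N) (Nat.iter c T x))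
              good p N K1 K2 Hp (fun c Hc => ind_0 _ _ Hc)
              (fun n => proj1 (Hvis n)) (fun n => proj2 (Hvis n))) as [M0 HM0].
  exists (running_max (sumr (fun i => f (Nat.iter i T x)) 0) M0).
  intros [|n] Hn; [lia|]. simpl Bsum. rewrite sum_f_R0_sumr.
  apply (partial_sums_bounded _ good N M0); auto.
  intros c k Hc Hk. apply window_sum_nonpos with N; auto.
Qed.

End Inverse.

End Orbit.

Section ProbabilitySpace.

Context {X : Type} {M : (X -> Prop) -> Prop} {mu : (X -> Prop) -> R}
  (Hprob : is_probability_space M mu).

Lemma M_True : M (fun _ => True).
Proof. apply Hprob. Qed.

Lemma M_compl A : M A -> M (fun x => ~ A x).
Proof. apply Hprob. Qed.

Lemma M_exists (A : nat -> X -> Prop) : (forall n, M (A n)) -> M (fun x => exists n, A n x).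
Proof. apply Hprob. Qed.

Lemma mu_nonneg A : M A -> 0 <= mu A.
Proof. apply Hprob. Qed.

Lemma mu_True : mu (fun _ => True) = 1.
Proof. apply Hprob. Qed.

Lemma mu_countable_add (A : nat -> X -> Prop) : (forall n, M (A n)) ->
  (forall n m x, n <> m -> A n x -> A m x -> False) ->
  infinite_sum (fun n => mu (A n)) (mu (fun x => exists n, A n x)).
Proof. apply Hprob. Qed.

Lemma M_ext A B : (forall x, A x <-> B x) -> M A -> M B.
Proof. intro H; rewrite (pred_ext A B H); auto. Qed.

Lemma mu_ext A B : (forall x, A x <-> B x) -> mu A = mu B.
Proof. intro H; rewrite (pred_ext A B H); auto. Qed.

Lemma M_False : M (fun _ => False).
Proof. apply (M_ext (fun x => ~ True)); [tauto|]. apply M_compl, M_True. Qed.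

Lemma M_const (P : Prop) : M (fun _ => P).
Proof.
  destruct (classic P).
  - apply (M_ext (fun _ => True)); [tauto|apply M_True].
  - apply (M_ext (fun _ => False)); [tauto|apply M_False].
Qed.

Lemma M_or A B : M A -> M B -> M (fun x => A x \/ B x).
Proof.
  intros HA HB. apply (M_ext (fun x => exists n, (match n with O => A | _ => B end) x)).
  - intro x; split; [intros [[|n] H]; auto|intros [H|H]; [exists O|exists 1%nat]; auto].
  - apply M_exists; intros [|n]; auto.
Qed.

Lemma M_and A B : M A -> M B -> M (fun x => A x /\ B x).
Proof.
  intros HA HB. apply (M_ext (fun x => ~ (~ A x \/ ~ B x))); [intro x; tauto|].
  apply M_compl, M_or; apply M_compl; auto.
Qed.

Lemma M_forall (A : nat -> X -> Prop) : (forall n, M (A n)) -> M (fun x => forall n, A n x).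
Proof.
  intro H. apply (M_ext (fun x => ~ exists n, ~ A n x)).
  - intro x; split; [intros H1 n; apply NNPP; intro; apply H1; eauto|intros H1 [n Hn]; auto].
  - apply M_compl, M_exists; intros; apply M_compl; auto.
Qed.

Lemma M_impl_const (P : Prop) A : M A -> M (fun x => P -> A x).
Proof.
  intro HA; destruct (classic P).
  - apply (M_ext A); [tauto|auto].
  - apply (M_ext (fun _ => True)); [tauto|apply M_True].
Qed.

Lemma mu_False : mu (fun _ => False) = 0.
Proof.
  pose proof (mu_countable_add (fun _ _ => False) (fun _ => M_False) (fun _ _ _ _ H _ => H)) as Hs.
  cbv beta in Hs.
  rewrite (mu_ext (fun x => exists n : nat, False) (fun _ => False)) in Hs
    by (intro; split; [intros [_ []]|intros []]).
  set (c := mu (fun _ => False)) in *.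
  assert (Hc : 0 <= c) by apply mu_nonneg, M_False.
  (* the constant series [c + c + ...] converges to [c] only if [c = 0] *)
  destruct (Req_dec c 0) as [|Hne]; auto. exfalso.
  destruct (Hs c) as [N HN]; [lra|]. specialize (HN (S N) ltac:(lia)).
  assert (Hsum : forall n, sum_f_R0 (fun _ => c) n = (INR n + 1) * c).
  { induction n as [|n IHn]; simpl sum_f_R0; [simpl; ring|]. rewrite IHn, S_INR. ring. }
  rewrite Hsum in HN. unfold Rdist in HN. rewrite S_INR in HN.
  pose proof (pos_INR N). rewrite Rabs_right in HN by nra. nra.
Qed.

Lemma mu_add A B : M A -> M B -> (forall x, A x -> B x -> False) ->
  mu (fun x => A x \/ B x) = mu A + mu B.
Proof.
  intros HA HB Hd.
  set (F := fun n : nat => match n with O => A | 1%nat => B | _ => fun _ => False end).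
  assert (HF : forall n, M (F n)) by (intros [|[|n]]; simpl; auto using M_False).
  assert (HFd : forall n m x, n <> m -> F n x -> F m x -> False).
  { intros [|[|n]] [|[|m]] x Hnm; simpl; try tauto; eauto. }
  pose proof (mu_countable_add F HF HFd) as Hs.
  rewrite (mu_ext (fun x => exists n, F n x) (fun x => A x \/ B x)) in Hs.
  2:{ intro x; split; [intros [[|[|n]] H]; simpl in H; tauto
                     |intros [H|H]; [exists O|exists 1%nat]; auto]. }
  apply (uniqueness_sum _ _ _ Hs). apply infinite_sum_eventually_const with 1%nat.
  intros n Hn. induction n as [|n IHn]; [lia|]. destruct n; [simpl; ring|].
  change (sum_f_R0 (fun k => mu (F k)) (S n) + mu (fun _ => False) = mu A + mu B).
  rewrite IHn by lia. rewrite mu_False. ring.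
Qed.

Lemma mu_split A S : M A -> M S ->
  mu A = mu (fun x => A x /\ S x) + mu (fun x => A x /\ ~ S x).
Proof.
  intros HA HS. rewrite <- mu_add by (auto using M_and, M_compl; intros; tauto).
  apply mu_ext; intro; tauto.
Qed.

Lemma mu_mono A B : M A -> M B -> (forall x, A x -> B x) -> mu A <= mu B.
Proof.
  intros HA HB H. rewrite (mu_split B A) by auto.
  rewrite (mu_ext (fun x => B x /\ A x) A) by (intro x; specialize (H x); tauto).
  pose proof (mu_nonneg _ (M_and _ _ HB (M_compl _ HA))). lra.
Qed.

Lemma mu_compl A : M A -> mu (fun x => ~ A x) = 1 - mu A.
Proof.
  intro HA. rewrite <- mu_True, (mu_split (fun _ => True) A) by auto using M_True.
  rewrite (mu_ext (fun x => True /\ A x) A), (mu_ext (fun x => True /\ ~ A x) (fun x => ~ A x))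
    by (intro; tauto).
  ring.
Qed.

Lemma mu_subadd A B : M A -> M B -> mu (fun x => A x \/ B x) <= mu A + mu B.
Proof.
  intros HA HB.
  rewrite (mu_ext _ (fun x => A x \/ (B x /\ ~ A x))) by (intro; tauto).
  rewrite mu_add by (auto using M_and, M_compl; intros; tauto).
  pose proof (mu_mono (fun x => B x /\ ~ A x) B ltac:(auto using M_and, M_compl) HB
                ltac:(intros x [Hx _]; exact Hx)). lra.
Qed.

Lemma mu_increasing_union_le (B : nat -> X -> Prop) c :
  (forall n, M (B n)) -> (forall n x, B n x -> B (S n) x) -> (forall n, mu (B n) <= c) ->
  mu (fun x => exists n, B n x) <= c.
Proof.
  intros HB Hinc Hc.
  assert (Hmono : forall n m x, (n <= m)%nat -> B n x -> B m x).
  { intros n m x Hnm; induction Hnm; auto. }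
  set (D := fun n : nat => match n with O => B O | S n' => fun x => B (S n') x /\ ~ B n' x end).
  assert (HD : forall n, M (D n)) by (intros [|n]; simpl; auto using M_and, M_compl).
  assert (HDd : forall n m x, n <> m -> D n x -> D m x -> False).
  { intros n m x Hnm.
    assert (Hlt : forall n m, (n < m)%nat -> D n x -> D m x -> False).
    { intros a [|b] Hab Ha Hb; [lia|]. apply Hb. apply (Hmono a); [lia|]. destruct a; apply Ha. }
    destruct (Nat.lt_total n m) as [|[|]]; eauto. }
  pose proof (mu_countable_add D HD HDd) as Hs.
  rewrite (mu_ext (fun x => exists n, D n x) (fun x => exists n, B n x)) in Hs.
  2:{ intro x; split; [intros [[|n] H]; [exists O|exists (S n)]; apply H|intros [n H]].
      induction n as [|n IHn]; [exists O; auto|].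
      destruct (classic (B n x)); auto. exists (S n); simpl; auto. }
  apply (infinite_sum_le _ _ _ Hs). intro n.
  assert (Htel : sum_f_R0 (fun k => mu (D k)) n = mu (B n)).
  { induction n as [|n IHn]; simpl; auto. rewrite IHn.
    rewrite (mu_split (B (S n)) (B n)) by auto.
    rewrite (mu_ext (fun x => B (S n) x /\ B n x) (B n)) by (intro x; split; [tauto|auto]).
    reflexivity. }
  rewrite Htel; auto.
Qed.

Lemma M_lt g b : measurable_fun M g -> M (fun x => g x < b).
Proof.
  intro Hg. apply (M_ext (fun x => exists m : nat, g x <= b - / (INR m + 1))).
  - intro x; split.
    + intros [m Hm]. pose proof (pos_INR m).
      assert (0 < / (INR m + 1)) by (apply Rinv_0_lt_compat; lra). lra.
    + intro H. destruct (inv_INR_S_lt (b - g x)) as [m Hm]; [lra|]. exists m; lra.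
  - apply M_exists; intro; apply Hg.
Qed.

Lemma M_ge g b : measurable_fun M g -> M (fun x => g x >= b).
Proof. intro Hg. apply (M_ext (fun x => ~ g x < b)); [intro; lra|]. apply M_compl, M_lt; auto. Qed.

Lemma M_gt g b : measurable_fun M g -> M (fun x => g x > b).
Proof. intro Hg. apply (M_ext (fun x => ~ g x <= b)); [intro; lra|]. apply M_compl, Hg. Qed.

Lemma measurable_fun_const c : measurable_fun M (fun _ => c).
Proof. intro a; apply M_const. Qed.

Lemma rational_between u v : u < v -> exists i j k : nat, u < (INR i - INR j) / (INR k + 1) < v.
Proof.
  intro Huv. destruct (inv_INR_S_lt (v - u)) as [k Hk]; [lra|].
  pose proof (pos_INR k). set (d := INR k + 1) in *.
  assert (Hd : 0 < d) by (unfold d; lra).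
  destruct (archimed (u * d)) as [H1 H2].
  exists (Z.to_nat (up (u * d))), (Z.to_nat (- up (u * d))), k. fold d.
  rewrite <- IZR_nat_diff.
  assert (Hk' : 1 < (v - u) * d).
  { apply (Rmult_lt_compat_r d) in Hk; auto. rewrite Rinv_l in Hk by lra. lra. }
  split; apply Rmult_lt_reg_r with d; auto; unfold Rdiv;
    rewrite Rmult_assoc, Rinv_l, Rmult_1_r by lra; lra.
Qed.

Lemma measurable_fun_plus g h : measurable_fun M g -> measurable_fun M h ->
  measurable_fun M (fun x => g x + h x).
Proof.
  intros Hg Hh a.
  (* [g x + h x > a] iff some rational [q] has [g x > q] and [h x > a - q] *)
  apply (M_ext (fun x => ~ exists i j k : nat,
     g x > (INR i - INR j) / (INR k + 1) /\ h x > a - (INR i - INR j) / (INR k + 1))).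
  - intro x; split.
    + intro H. apply Rnot_lt_le. intro Hlt. apply H.
      destruct (rational_between (a - h x) (g x)) as [i [j [k Hq]]]; [lra|]. exists i, j, k; lra.
    + intros Hle [i [j [k Hq]]]. lra.
  - apply M_compl. do 3 (apply M_exists; intro). apply M_and; apply M_gt; auto.
Qed.

Lemma measurable_fun_scal c g : measurable_fun M g -> measurable_fun M (fun x => c * g x).
Proof.
  intros Hg a. destruct (Rtotal_order c 0) as [Hc|[Hc|Hc]].
  - apply (M_ext (fun x => g x >= a / c)); [|apply M_ge; auto].
    intro x. assert (Ea : a = c * (a / c)) by (field; lra).
    set (b := a / c) in *. rewrite Ea. split; intro H; nra.
  - subst c. apply (M_ext (fun _ => 0 <= a)); [intro; rewrite Rmult_0_l; tauto|apply M_const].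
  - apply (M_ext (fun x => g x <= a / c)); [|apply Hg].
    intro x. assert (Ea : a = c * (a / c)) by (field; lra).
    set (b := a / c) in *. rewrite Ea. split; intro H; nra.
Qed.

Lemma measurable_fun_ind S : M S -> measurable_fun M (ind S).
Proof.
  intros HS a. destruct (Rle_dec 1 a); [|destruct (Rle_dec 0 a)].
  - apply (M_ext (fun _ => True)); [|apply M_True].
    intro x; pose proof (ind_bounds S x); split; intros; [lra|auto].
  - apply (M_ext (fun x => ~ S x)); [|apply M_compl; auto].
    intro x; split; intro H; [rewrite ind_0; auto|intro Hs; rewrite ind_1 in H; auto].
  - apply (M_ext (fun _ => False)); [|apply M_False].
    intro x; pose proof (ind_bounds S x); split; intros; [tauto|lra].
Qed.

Lemma measurable_fun_sumr (G : nat -> X -> R) s L : (forall i, measurable_fun M (G i)) ->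
  measurable_fun M (fun x => sumr (fun i => G i x) s L).
Proof.
  intro HG. revert s; induction L as [|L IHL]; intro s; simpl.
  - apply measurable_fun_const.
  - apply measurable_fun_plus; auto.
Qed.

Lemma measurable_fun_sum_f_R0 (G : nat -> X -> R) n : (forall i, measurable_fun M (G i)) ->
  measurable_fun M (fun x => sum_f_R0 (fun i => G i x) n).
Proof.
  intro HG. intro a.
  apply (M_ext (fun x => sumr (fun i => G i x) 0 (S n) <= a));
    [intro; rewrite sum_f_R0_sumr; tauto|].
  apply measurable_fun_sumr; auto.
Qed.

Lemma measurable_fun_comp g (F : X -> X) : (forall A, M A -> M (fun x => A (F x))) ->
  measurable_fun M g -> measurable_fun M (fun x => g (F x)).
Proof. intros HF Hg a; apply (HF (fun y => g y <= a)); apply Hg. Qed.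

Definition simple_fun (l : list (R * (X -> Prop))) (x : X) : R :=
  fold_right (fun p acc => fst p * ind (snd p) x + acc) 0 l.

Definition simple_integral (l : list (R * (X -> Prop))) (D : X -> Prop) : R :=
  fold_right (fun p acc => fst p * mu (fun x => snd p x /\ D x) + acc) 0 l.

Lemma simple_fun_app l1 l2 x : simple_fun (l1 ++ l2) x = simple_fun l1 x + simple_fun l2 x.
Proof. induction l1 as [|a l1 IH]; simpl; [ring|]. unfold simple_fun in *. simpl. rewrite IH. ring. Qed.

Lemma simple_integral_app l1 l2 D :
  simple_integral (l1 ++ l2) D = simple_integral l1 D + simple_integral l2 D.
Proof. induction l1 as [|a l1 IH]; simpl; [ring|]. unfold simple_integral in *. simpl. rewrite IH. ring. Qed.

Lemma simple_integral_split l D S : M D -> M S -> (forall p, In p l -> M (snd p)) ->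
  simple_integral l D =
  simple_integral l (fun x => D x /\ S x) + simple_integral l (fun x => D x /\ ~ S x).
Proof.
  intros HD HS; induction l as [|[w S'] l IH]; intros Hl; simpl; [ring|].
  rewrite IH by (intros; apply Hl; simpl; auto).
  assert (HS' : M S') by (apply (Hl (w, S')); simpl; auto).
  rewrite (mu_split (fun x => S' x /\ D x) S) by auto using M_and.
  rewrite (mu_ext (fun x => (S' x /\ D x) /\ S x) (fun x => S' x /\ D x /\ S x)),
          (mu_ext (fun x => (S' x /\ D x) /\ ~ S x) (fun x => S' x /\ D x /\ ~ S x))
    by (intro; tauto).
  ring.
Qed.

(* Splitting [D] along each set of [l] in turn reduces to constant functions on the cells. *)
Lemma simple_integral_nonneg l : forall D c, M D -> (forall p, In p l -> M (snd p)) ->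
  (forall x, D x -> 0 <= c + simple_fun l x) -> 0 <= c * mu D + simple_integral l D.
Proof.
  induction l as [|[w S] l IH]; intros D c HD Hl Hpt; simpl.
  - destruct (classic (exists x, D x)) as [[x Hx]|Hn].
    + specialize (Hpt x Hx). simpl in Hpt. pose proof (mu_nonneg D HD). nra.
    + rewrite (mu_ext D (fun _ => False)) by (intro x; split; [intro; apply Hn; eauto|tauto]).
      rewrite mu_False. lra.
  - assert (HS : M S) by (apply (Hl (w, S)); simpl; auto).
    assert (Hl' : forall p, In p l -> M (snd p)) by (intros; apply Hl; simpl; auto).
    pose proof (IH (fun x => D x /\ S x) (c + w) ltac:(auto using M_and) Hl') as H1.
    pose proof (IH (fun x => D x /\ ~ S x) c ltac:(auto using M_and, M_compl) Hl') as H2.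
    assert (P1 : forall x, D x /\ S x -> 0 <= c + w + simple_fun l x).
    { intros x [Hx Hs]. specialize (Hpt x Hx). simpl in Hpt. rewrite ind_1 in Hpt by auto. lra. }
    assert (P2 : forall x, D x /\ ~ S x -> 0 <= c + simple_fun l x).
    { intros x [Hx Hs]. specialize (Hpt x Hx). simpl in Hpt. rewrite ind_0 in Hpt by auto. lra. }
    specialize (H1 P1). specialize (H2 P2).
    rewrite (simple_integral_split l D S), (mu_split D S) by auto.
    rewrite (mu_ext (fun x => S x /\ D x) (fun x => D x /\ S x)) by (intro; tauto).
    lra.
Qed.

Section MeasurePreserving.

Context {T Tinv : X -> X} (HT : invertible_mpt M mu T Tinv).

Lemma M_preimage_iter n : forall A, M A -> M (fun x => A (Nat.iter n T x)).
Proof.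
  induction n as [|n IHn]; intros A HA; simpl; auto.
  apply (IHn (fun y => A (T y))), HT; auto.
Qed.

Lemma M_preimage_iter_inv n : forall A, M A -> M (fun x => A (Nat.iter n Tinv x)).
Proof.
  induction n as [|n IHn]; intros A HA; simpl; auto.
  apply (IHn (fun y => A (Tinv y))), HT; auto.
Qed.

Lemma mu_preimage_iter n : forall A, M A -> mu (fun x => A (Nat.iter n T x)) = mu A.
Proof.
  induction n as [|n IHn]; intros A HA; simpl; auto.
  rewrite (IHn (fun y => A (T y))) by (apply HT; auto). apply HT; auto.
Qed.

Lemma measurable_fun_Tpow g z : measurable_fun M g ->
  measurable_fun M (fun x => g (Tpow T Tinv z x)).
Proof.
  intro Hg. destruct z; simpl; auto; apply measurable_fun_comp; auto;
    intros; [apply M_preimage_iter|apply M_preimage_iter_inv]; auto.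
Qed.

Lemma measurable_fun_Bavg f n : measurable_fun M f -> measurable_fun M (Bavg T Tinv f n).
Proof.
  intro Hf. apply measurable_fun_scal.
  apply (measurable_fun_sum_f_R0 (fun k x => f (Tpow T Tinv (Z.of_nat k - Z.of_nat n) x))).
  intro; apply measurable_fun_Tpow; auto.
Qed.

Lemma measurable_fun_visits A n : M A -> measurable_fun M (visits T A n).
Proof.
  intro HA. apply (measurable_fun_sumr (fun i x => ind A (Nat.iter i T x))).
  intro i. apply measurable_fun_comp;
    [intros; apply M_preimage_iter; auto|apply measurable_fun_ind; auto].
Qed.

Lemma M_exceed_set A beta K : M A -> M (exceed_set T A beta K).
Proof.
  intro HA. apply M_exists. intro n.
  apply M_and; [apply M_const|apply M_gt, measurable_fun_visits; auto].
Qed.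

Lemma simple_fun_orbit w P s L x :
  simple_fun (map (fun c => (w, fun y => P (Nat.iter c T y))) (seq s L)) x =
  w * sumr (fun c => ind P (Nat.iter c T x)) s L.
Proof.
  revert s; induction L as [|L IHL]; intro s; simpl; [ring|].
  unfold simple_fun in *. simpl. rewrite IHL. unfold ind. ring.
Qed.

Lemma simple_integral_orbit w P s L : M P ->
  simple_integral (map (fun c => (w, fun y => P (Nat.iter c T y))) (seq s L)) (fun _ => True)
  = w * INR L * mu P.
Proof.
  intro HP. revert s; induction L as [|L IHL]; intro s; simpl; [ring|].
  unfold simple_integral in *. simpl. rewrite IHL.
  rewrite (mu_ext (fun x => P (Nat.iter s T x) /\ True) (fun x => P (Nat.iter s T x)))
    by (intro; tauto).
  rewrite mu_preimage_iter by auto. destruct L; simpl; ring.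
Qed.

Lemma exceed_set_mu_le A beta K : M A -> 0 <= beta ->
  beta * mu (exceed_set T A beta K) <= mu A.
Proof.
  intros HA Hb.
  assert (HE := M_exceed_set A beta K HA).
  (* integrating [exceed_set_visits_le] over [X] *)
  assert (Hineq : forall L : nat, beta * INR L * mu (exceed_set T A beta K) <= INR (L + K) * mu A).
  { intro L.
    set (l := map (fun c => (1, fun y => A (Nat.iter c T y))) (seq 0 (L + K)) ++
              map (fun c => (- beta, fun y => exceed_set T A beta K (Nat.iter c T y))) (seq 0 L)).
    assert (Hl : forall p, In p l -> M (snd p)).
    { intros p Hp. apply in_app_or in Hp.
      destruct Hp as [Hp|Hp]; apply in_map_iff in Hp;
        destruct Hp as [c [<- _]]; simpl; apply M_preimage_iter; auto. }
    assert (Hpt : forall x, True -> 0 <= 0 + simple_fun l x).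
    { intros x _. unfold l. rewrite simple_fun_app, !simple_fun_orbit.
      pose proof (exceed_set_visits_le T A beta K x Hb L 0). lra. }
    pose proof (simple_integral_nonneg l (fun _ => True) 0 M_True Hl Hpt) as H.
    unfold l in H. rewrite simple_integral_app, !simple_integral_orbit in H by auto. lra. }
  destruct (Rle_dec (beta * mu (exceed_set T A beta K)) (mu A)) as [|Hn]; auto. exfalso.
  set (d := beta * mu (exceed_set T A beta K) - mu A).
  assert (Hd : 0 < d) by (unfold d; lra).
  destruct (INR_unbounded (INR K * mu A / d)) as [L HL].
  specialize (Hineq L). rewrite plus_INR in Hineq.
  apply (Rmult_lt_compat_r d) in HL; auto.
  unfold Rdiv in HL. rewrite Rmult_assoc, Rinv_l, Rmult_1_r in HL by lra.
  unfold d in *. nra.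
Qed.

Lemma maximal_inequality A beta : M A -> 0 < beta ->
  mu (fun x => exists K, exceed_set T A beta K x) <= mu A / beta.
Proof.
  intros HA Hb. apply mu_increasing_union_le.
  - intro; apply M_exceed_set; auto.
  - intros n x [k [Hk Hx]]. exists k; split; auto.
  - intro K. pose proof (exceed_set_mu_le A beta K HA ltac:(lra)).
    apply Rmult_le_reg_l with beta; auto. unfold Rdiv.
    rewrite <- Rmult_assoc, (Rmult_comm beta (mu A)), Rmult_assoc, Rinv_r, Rmult_1_r by lra.
    lra.
Qed.

Lemma M_excess_unbounded A beta : M A -> M (excess_unbounded T A beta).
Proof.
  intro HA. apply M_forall; intro K. apply M_exists; intro n.
  apply (M_ge (fun x => visits T A n x + - (beta * INR n))).
  apply measurable_fun_plus; [apply measurable_fun_visits; auto|apply measurable_fun_const].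
Qed.

Lemma excess_unbounded_null A beta : ergodic M mu T -> M A -> mu A < beta ->
  mu (excess_unbounded T A beta) = 0.
Proof.
  intros Herg HA Hlt.
  assert (HA0 := mu_nonneg A HA).
  destruct (Herg _ (M_excess_unbounded A beta HA)
              (fun x => excess_unbounded_T T A beta x ltac:(lra))) as [|H1]; auto.
  exfalso.
  pose proof (maximal_inequality A beta HA ltac:(lra)) as Hmax.
  assert (Hsub : mu (excess_unbounded T A beta) <= mu (fun x => exists K, exceed_set T A beta K x)).
  { apply mu_mono; [apply M_excess_unbounded; auto
                   |apply M_exists; intro; apply M_exceed_set; auto|].
    intros x Hx. destruct (Hx 1%nat) as [n Hn]. exists n, n. split; auto. simpl in Hn. lra. }
  assert (mu A / beta < 1).
  { apply Rmult_lt_reg_r with beta; [lra|]. unfold Rdiv.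
    rewrite Rmult_assoc, Rinv_l by lra. lra. }
  lra.
Qed.

Lemma visits_linear_bounds_ae A lo hi : ergodic M mu T -> M A -> lo < mu A < hi ->
  exists Nul, M Nul /\ mu Nul = 0 /\ forall x, ~ Nul x ->
    exists K1 K2 : nat, forall n,
      visits T A n x < hi * INR n + INR K1 /\ lo * INR n - INR K2 < visits T A n x.
Proof.
  intros Herg HA [Hlo Hhi].
  set (Ac := fun x => ~ A x).
  assert (HAc : M Ac) by (apply M_compl; auto).
  (* frequencies of [A] below [lo] are frequencies of its complement above [1 - lo] *)
  assert (HmuAc : mu Ac < 1 - lo) by (unfold Ac; rewrite mu_compl; auto; lra).
  pose proof (M_excess_unbounded A hi HA) as HU1.
  pose proof (M_excess_unbounded Ac (1 - lo) HAc) as HU2.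
  exists (fun x => excess_unbounded T A hi x \/ excess_unbounded T Ac (1 - lo) x).
  split; [apply M_or; auto|split].
  - pose proof (mu_subadd _ _ HU1 HU2) as Hsub.
    rewrite !excess_unbounded_null in Hsub by auto.
    pose proof (mu_nonneg _ (M_or _ _ HU1 HU2)). lra.
  - intros x Hx.
    destruct (not_all_ex_not _ _ (fun H => Hx (or_introl H))) as [K1 HK1].
    destruct (not_all_ex_not _ _ (fun H => Hx (or_intror H))) as [K2 HK2].
    exists K1, K2. intro n. split.
    + apply Rnot_ge_lt. intro H. apply HK1. exists n. lra.
    + assert (H : ~ (visits T Ac n x - (1 - lo) * INR n >= INR K2)) by (intro H; apply HK2; eauto).
      unfold visits, Ac in H.
      rewrite (sumr_ext _ (fun i => 1 - ind A (Nat.iter i T x))) in H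
        by (intros; apply ind_compl).
      rewrite sumr_one_minus in H. unfold visits. lra.
Qed.

Lemma M_Bavg_nonpos_after f N : measurable_fun M f -> M (Bavg_nonpos_after T Tinv f N).
Proof.
  intro Hf. apply M_and; [apply M_const|].
  apply M_forall; intro n. apply M_impl_const, measurable_fun_Bavg; auto.
Qed.

Lemma Bavg_nonpos_after_pos f : measurable_fun M f ->
  mu (fun x => exists N, Bavg_nonpos_after T Tinv f N x) > 0 ->
  exists N, mu (Bavg_nonpos_after T Tinv f N) > 0.
Proof.
  intros Hf Hpos. apply NNPP; intro Hn.
  assert (Hle : mu (fun x => exists N, Bavg_nonpos_after T Tinv f N x) <= 0).
  { apply mu_increasing_union_le.
    - intro; apply M_Bavg_nonpos_after; auto.
    - intros N x [HN Hx]. split; [lia|]. intros n Hn'. apply Hx; lia.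
    - intro N. apply Rnot_lt_le. intro; apply Hn; eauto. }
  lra.
Qed.

End MeasurePreserving.

End ProbabilitySpace.
Theorem lemma2 (X : Type) (M : (X -> Prop) -> Prop) (mu : (X -> Prop) -> R)
    (T Tinv : X -> X) (f : X -> R)
    (Hprob : is_probability_space M mu)
    (HT : invertible_mpt M mu T Tinv)
    (Herg : ergodic M mu T)
    (Hf : measurable_fun M f)
    (Hpos : mu (fun x => exists N : nat, (N > 0)%nat /\
                   forall n : nat, (n > N)%nat -> Bavg T Tinv f n x <= 0) > 0) :
  exists Nul : X -> Prop, M Nul /\ mu Nul = 0 /\
    forall x, ~ Nul x -> exists C : R, forall n : nat, (n > 0)%nat -> Bsum T f n x <= C.
Proof.
  destruct (Bavg_nonpos_after_pos Hprob HT f Hf Hpos) as [N HN].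
  set (A := Bavg_nonpos_after T Tinv f N) in HN.
  set (p := mu A) in HN.
  destruct (visits_linear_bounds_ae Hprob HT A (3 * p / 4) (5 * p / 4) Herg
              (M_Bavg_nonpos_after Hprob HT f N Hf) ltac:(unfold p in *; lra))
    as [Nul [HNul [Hnull Hae]]].
  exists Nul. split; [|split]; auto.
  intros x Hx. destruct (Hae x Hx) as [K1 [K2 HK]].
  exact (Bsum_bounded_of_visits T Tinv (proj1 HT) f N p x K1 K2 HN HK).
Qed.
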